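(* On the noncommutative space $\mathbb{R}^4_\theta$ described in the context, the pair $(g,(\nabla,\sigma))$ is a Riemannian structure on the differential calculus $(\Omega^1_A,\mathrm{d})$.
   Context: Let $\theta\in\mathbb{R}$ and $R=(R^{ab})$ the $4\times4$ matrix (row $a$, column $b$) with rows $(1,e^{-i\theta},1,e^{i\theta})$, $(e^{i\theta},1,e^{-i\theta},1)$, $(1,e^{i\theta},1,e^{-i\theta})$, $(e^{-i\theta},1,e^{i\theta},1)$. $A=\mathbb{C}\langle z^1,\dots,z^4\rangle/(z^iz^j-R^{ji}z^jz^i)$; $\Omega^1_A=\bigoplus_iA\,\mathrm{d}z^i$ free left module with $\mathrm{d}z^i\,z^j=R^{ji}z^j\mathrm{d}z^i$, $\mathrm{d}z^i$ the image of $z^i$ under the Leibniz extension $\mathrm{d}$. With $P$ the matrix with rows $(0,0,1,0),(0,0,0,1),(1,0,0,0),(0,1,0,0)$, $(g_{ij})=\tfrac12P$, $(g^{ij})=2P$: metric $g=\sum g_{ij}\mathrm{d}z^i\otimes_A\mathrm{d}z^j$, inverse metric $g^{-1}(\mathrm{d}z^i\otimes_A\mathrm{d}z^j)=g^{ij}$ (left $A$-linear). $\nabla(\sum_ia_i\mathrm{d}z^i)=\sum_i\mathrm{d}a_i\otimes_A\mathrm{d}z^i$; $\sigma$ left $A$-linear with $\sigma(\mathrm{d}z^i\otimes_A\mathrm{d}z^j)=R^{ji}\mathrm{d}z^j\otimes_A\mathrm{d}z^i$. A Riemannian structure on $(\Omega^1_A,\mathrm{d})$ is a pair of a metric $g$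 (bimodule map $A\to\Omega^1_A\otimes_A\Omega^1_A$ with inverse bimodule map $g^{-1}$ satisfying $\sum_\alpha g^{-1}(\omega\otimes g^\alpha)g_\alpha=\omega=\sum_\alpha g^\alpha g^{-1}(g_\alpha\otimes\omega)$, $g(1)=\sum g^\alpha\otimes g_\alpha$) and a bimodule connection $(\nabla,\sigma)$ on $\Omega^1_A$ (left and right Leibniz rules $\nabla(a\omega)=a\nabla\omega+\mathrm{d}a\otimes\omega$, $\nabla(\omega a)=\nabla(\omega)a+\sigma(\omega\otimes\mathrm{d}a)$, $\sigma$ a bimodule isomorphism) such that $g^{-1}\circ\sigma=g^{-1}$ and $(\mathrm{id}\otimes_Ag^{-1})\circ\nabla^\otimes=\mathrm{d}\circ g^{-1}$ on $\Omega^1_A\otimes_A\Omega^1_A$, where $\nabla^\otimes(\omega\otimes\zeta)=\nabla(\omega)\otimes\zeta+(\sigma\otimes\mathrm{id})(\omega\otimes\nabla\zeta)$. *)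

From HB Require Import structures.
From mathcomp Require Import all_boot all_order all_algebra.
From mathcomp Require Import reals trigo.
From mathcomp Require Import complex.

Set Implicit Arguments.
Unset Strict Implicit.
Unset Printing Implicit Defensive.

Import Order.TTheory GRing.Theory Num.Theory.
Local Open Scope ring_scope.

(* The constants of R^4_theta.  Indices a, b : 'I_4 stand for 1..4.          *)

Section Constants.
Variable R : realType.

Definition expi (t : R) : R[i] := Complex (cos t) (sin t).

Definition Rth (t : R) (a b : 'I_4) : R[i] :=
  let e := expi t in let e' := expi (- t) in
  match nat_of_ord a, nat_of_ord b with
  | 0, 0 => 1 | 0, 1 => e' | 0, 2 => 1 | 0, _ => e
  | 1, 0 => e | 1, 1 => 1 | 1, 2 => e' | 1, _ => 1
  | 2, 0 => 1 | 2, 1 => e | 2, 2 => 1 | 2, _ => e'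
  | _, 0 => e' | _, 1 => 1 | _, 2 => e | _, _ => 1
  end.

Definition Pmat (a b : 'I_4) : R[i] :=
  if nat_of_ord b == ((nat_of_ord a + 2) %% 4)%N then 1 else 0.

Definition gl (a b : 'I_4) : R[i] := 2^-1 * Pmat a b.
Definition gu (a b : 'I_4) : R[i] := 2 * Pmat a b.

End Constants.

Section Algebra.
Variable K : fieldType.

Definition is_alg_hom (A B : algType K) (f : A -> B) : Prop :=
  [/\ forall a b, f (a + b) = f a + f b,
      forall (c : K) a, f (c *: a) = c *: f a,
      forall a b, f (a * b) = f a * f b
    & f 1 = 1].

Definition satisfies_rel (Rm : 'I_4 -> 'I_4 -> K) (B : algType K)
  (w : 'I_4 -> B) : Prop :=
  forall i j, w i * w j = Rm j i *: (w j * w i).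

(* (A, z) is the algebra C<z^1..z^4>/(z^i z^j - R^{ji} z^j z^i): it satisfies
   the relations and is universal (initial) among algebras with four
   elements satisfying the relations. *)
Definition is_presentation (Rm : 'I_4 -> 'I_4 -> K) (A : algType K)
  (z : 'I_4 -> A) : Prop :=
  satisfies_rel Rm z /\
  forall (B : algType K) (w : 'I_4 -> B), satisfies_rel Rm w ->
    (exists f : A -> B, is_alg_hom f /\ forall i, f (z i) = w i) /\
    (forall f g : A -> B, is_alg_hom f -> is_alg_hom g ->
       (forall i, f (z i) = g (z i)) -> forall a, f a = g a).

(* A consequence of the universal property (z generates A), recorded
   separately for convenience. *)
Definition generated_by (A : algType K) (z : 'I_4 -> A) : Prop :=
  forall P : A -> Prop,
    P 1 -> (forall a b, P a -> P b -> P (a + b)) ->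
    (forall (c : K) a, P a -> P (c *: a)) ->
    (forall i a, P a -> P (z i * a)) -> forall a, P a.

End Algebra.

(*  Om  = Omega^1_A : omega = sum_i omega_i dz^i            ('I_4 -> A)      *)
(*  T2  = Omega^1 (x)_A Omega^1 : sum T_ij dz^i (x) dz^j      ('I_4^2 -> A)    *)
(*  T3  = Omega^1 (x)_A Omega^1 (x)_A Omega^1                 ('I_4^3 -> A)    *)
(* rho i is the algebra map with dz^i b = rho_i(b) dz^i, i.e.                *)
(*  rho_i(z^j) = R^{ji} z^j  (from dz^i z^j = R^{ji} z^j dz^i).              *)

Section Calculus.
Variables (K : fieldType) (A : algType K).
Variable rho : 'I_4 -> A -> A.

Definition Om := 'I_4 -> A.
Definition T2 := 'I_4 -> 'I_4 -> A.
Definition T3 := 'I_4 -> 'I_4 -> 'I_4 -> A.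

Definition addO (w v : Om) : Om := fun i => w i + v i.
Definition scO (c : K) (w : Om) : Om := fun i => c *: w i.
Definition lactO (a : A) (w : Om) : Om := fun i => a * w i.
Definition ractO (w : Om) (b : A) : Om := fun i => w i * rho i b.
Definition dz (i : 'I_4) : Om := fun k => (k == i)%:R.
Definition sumO (n : nat) (F : 'I_n -> Om) : Om := fun k => \sum_(i < n) F i k.

Definition addT (s t : T2) : T2 := fun i j => s i j + t i j.
Definition lactT (a : A) (t : T2) : T2 := fun i j => a * t i j.
Definition ractT (t : T2) (b : A) : T2 := fun i j => t i j * rho i (rho j b).
(* omega (x) zeta, using  omega_i dz^i (x) zeta_j dz^j
                          = omega_i rho_i(zeta_j) dz^i (x) dz^j *)
Definition tens (w v : Om) : T2 := fun i j => w i * rho i (v j).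

Definition addT3 (X Y : T3) : T3 := fun i j k => X i j k + Y i j k.
Definition tensL (t : T2) (v : Om) : T3 :=
  fun i j k => t i j * rho i (rho j (v k)).
Definition tensR (w : Om) (t : T2) : T3 :=
  fun i j k => w i * rho i (t j k).

Definition is_Kadditive_OA (f : A -> Om) :=
  (forall a b, f (a + b) = addO (f a) (f b)) /\
  (forall (c : K) a, f (c *: a) = scO c (f a)).

Definition is_leibniz_ext (z : 'I_4 -> A) (d : A -> Om) : Prop :=
  [/\ is_Kadditive_OA d,
      forall a b, d (a * b) = addO (lactO a (d b)) (ractO (d a) b)
    & forall i, d (z i) = dz i].

Variables (Rm gl gu : 'I_4 -> 'I_4 -> K).
Variable d : A -> Om.

Definition gmet (a : A) : T2 := fun i j => a * (gl i j)%:A.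
(* inverse metric, left A-linear, g^{-1}(dz^i (x) dz^j) = g^{ij} *)
Definition ginv (t : T2) : A := \sum_(i < 4) \sum_(j < 4) t i j * (gu i j)%:A.
(* sigma, left A-linear, sigma(dz^i (x) dz^j) = R^{ji} dz^j (x) dz^i *)
Definition sigma (t : T2) : T2 := fun k l => t l k * (Rm k l)%:A.
Definition nabla (w : Om) : T2 :=
  fun k l => \sum_(i < 4) tens (d (w i)) (dz i) k l.
(* sigma (x) id, left A-linear:
   (sigma (x) id)(dz^i (x) dz^j (x) dz^k) = R^{ji} dz^j (x) dz^i (x) dz^k *)
Definition sigma_id (X : T3) : T3 := fun k l m => X l k m * (Rm k l)%:A.
(* id (x) g^{-1}, left A-linear:
   (id (x) g^{-1})(dz^i (x) dz^j (x) dz^k) = dz^i g^{jk} *)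
Definition id_ginv (X : T3) : Om :=
  fun i => \sum_(j < 4) \sum_(k < 4) X i j k * (gu j k)%:A.
Definition nabla_tens (w v : Om) : T3 :=
  addT3 (tensL (nabla w) v) (sigma_id (tensR w (nabla v))).

Definition sumO2 (F : 'I_4 -> 'I_4 -> Om) : Om :=
  fun k => \sum_(i < 4) \sum_(j < 4) F i j k.

(* g is a metric: g and g^{-1} are bimodule maps, g(1) = sum_alpha g^alpha (x) g_alpha
   with g^alpha = g_ij dz^i, g_alpha = dz^j (alpha = (i,j)), and
   sum g^{-1}(omega (x) g^alpha) g_alpha = omega = sum g^alpha g^{-1}(g_alpha (x) omega). *)
Definition is_metric : Prop :=
  [/\ [/\ forall a b, gmet (a + b) = addT (gmet a) (gmet b),
          forall a b, gmet (a * b) = lactT a (gmet b)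
        & forall a b, gmet (a * b) = ractT (gmet a) b],
      [/\ forall s t, ginv (addT s t) = ginv s + ginv t,
          forall a t, ginv (lactT a t) = a * ginv t
        & forall t b, ginv (ractT t b) = ginv t * b],
      forall w : Om,
        sumO2 (fun i j => lactO (ginv (tens w (scO (gl i j) (dz i)))) (dz j)) = w
    & forall w : Om,
        sumO2 (fun i j => ractO (scO (gl i j) (dz i)) (ginv (tens (dz j) w))) = w].

Definition is_bimodule_connection : Prop :=
  [/\ forall w v, nabla (addO w v) = addT (nabla w) (nabla v),
      forall a w, nabla (lactO a w) = addT (lactT a (nabla w)) (tens (d a) w),
      forall w a, nabla (ractO w a) = addT (ractT (nabla w) a) (sigma (tens w (d a)))
    & [/\ forall s t, sigma (addT s t) = addT (sigma s) (sigma t),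
          forall a t, sigma (lactT a t) = lactT a (sigma t),
          forall t b, sigma (ractT t b) = ractT (sigma t) b
        & bijective sigma]].

Definition is_riemannian_structure : Prop :=
  [/\ is_metric,
      is_bimodule_connection,
      forall t, ginv (sigma t) = ginv t
    & forall w v, id_ginv (nabla_tens w v) = d (ginv (tens w v))].

End Calculus.

From HB Require Import structures.
From mathcomp Require Import all_boot all_order all_algebra.
From mathcomp Require Import reals trigo.
From mathcomp Require Import complex.
From Stdlib Require Import FunctionalExtensionality.

Set Implicit Arguments.
Unset Strict Implicit.
Unset Printing Implicit Defensive.

Import GRing.Theory Num.Theory.
Local Open Scope ring_scope.

(** All structure maps are diagonal in the basis [dz^1, ..., dz^4].  The
   relation [dz^i b = rho_i(b) dz^i] is carried by the algebra automorphism
   [rho_i] scaling [z^j] by [R^{ji}]; the [rho_i] commute, and every identity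
   between them reduces to a check on the generators.  Three properties of [R]
   do the work: [R^{kl} R^{lk} = 1] makes [sigma] an involution;
   [R^{ki} R^{k,i+2} = 1] gives [rho_i rho_{i+2} = id], which makes the metric,
   pairing [dz^i] with [dz^{i+2}], central; and [R^{i,i+2} = 1] gives
   [g^{-1} o sigma = g^{-1}].  Metric compatibility and the right Leibniz rule
   of [nabla] follow from the Leibniz rule of [d] and from
   [(d (rho_l a))_k = R^{kl} rho_l ((d a)_k)], which holds on generators since
   [d z^j = dz^j]. *)

Section StructureConstants.
Variables (R : realType) (t : R).

Lemma expi_mulN : expi t * expi (- t) = 1.
Proof.
rewrite /expi cosN sinN /GRing.mul /=; apply/eqP; rewrite eq_complex /=.
by rewrite mulrN opprK -!expr2 cos2Dsin2 mulrN mulrC addNr !eqxx.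
Qed.

Lemma expiN_mul : expi (- t) * expi t = 1.
Proof. by rewrite mulrC expi_mulN. Qed.

Definition mate (i : 'I_4) : 'I_4 := Ordinal (ltn_pmod (i + 2) (isT : (0 < 4)%N)).

Lemma mateK : involutive mate.
Proof. by case=> [[|[|[|[|i]]]] ?]; apply: val_inj. Qed.

Lemma Pmat_mate i j : Pmat R i j = if j == mate i then 1 else 0.
Proof. by []. Qed.

Lemma Rth_mul_tr k l : Rth t k l * Rth t l k = 1.
Proof.
have := expi_mulN; have := expiN_mul.
by case: k => [[|[|[|[|k]]]] ?] //; case: l => [[|[|[|[|l]]]] ?];
  rewrite /Rth //= mul1r.
Qed.

Lemma Rth_mate i : Rth t i (mate i) = 1.
Proof. by case: i => [[|[|[|[|i]]]] ?]. Qed.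

Lemma Rth_mul_mate k i : Rth t k i * Rth t k (mate i) = 1.
Proof.
have := expi_mulN; have := expiN_mul.
by case: k => [[|[|[|[|k]]]] ?] //; case: i => [[|[|[|[|i]]]] ?];
  rewrite /Rth //= mul1r.
Qed.

End StructureConstants.

Lemma T2_ext (K : fieldType) (A : algType K) (s t : T2 A) :
  (forall i j, s i j = t i j) -> s = t.
Proof. by move=> st; do 2!apply: functional_extensionality => ?. Qed.

Section DiagonalCalculus.
Variables (K : fieldType) (A : algType K) (z : 'I_4 -> A).
Variables (c : 'I_4 -> 'I_4 -> K) (rho : 'I_4 -> A -> A) (d : A -> Om A).
Hypothesis z_gen : generated_by z.
Hypothesis rho_hom : forall i, is_alg_hom (rho i).
Hypothesis rhoz : forall i j, rho i (z j) = c j i *: z j.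
Hypothesis d_leibniz : is_leibniz_ext rho z d.

Lemma rhoD i a b : rho i (a + b) = rho i a + rho i b.
Proof. by case: (rho_hom i). Qed.

Lemma rhoZ i x a : rho i (x *: a) = x *: rho i a.
Proof. by case: (rho_hom i). Qed.

Lemma rhoM i a b : rho i (a * b) = rho i a * rho i b.
Proof. by case: (rho_hom i). Qed.

Lemma rho1 i : rho i 1 = 1.
Proof. by case: (rho_hom i). Qed.

Lemma rho0 i : rho i 0 = 0.
Proof. by have := rhoZ i 0 0; rewrite !scale0r. Qed.

Lemma rho_scalar i x : rho i x%:A = x%:A.
Proof. by rewrite rhoZ rho1. Qed.

Lemma rho_nat i n : rho i n%:R = n%:R.
Proof. by elim: n => [|n IHn]; rewrite ?rho0 // !mulrS rhoD rho1 IHn. Qed.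

Lemma rho_comm i j a : rho i (rho j a) = rho j (rho i a).
Proof.
elim/z_gen: a => [|a b IHa IHb|k a IHa|l a IHa].
- by rewrite !rho1.
- by rewrite !rhoD ?IHa ?IHb.
- by rewrite !rhoZ ?IHa.
by rewrite !rhoM IHa !rhoz !rhoZ !rhoz !scalerA mulrC.
Qed.

Lemma rhoK i j : (forall k, c k i * c k j = 1) -> cancel (rho j) (rho i).
Proof.
move=> cij; elim/z_gen => [|a b IHa IHb|k a IHa|l a IHa].
- by rewrite !rho1.
- by rewrite !rhoD ?IHa ?IHb.
- by rewrite !rhoZ ?IHa.
by rewrite !rhoM IHa !rhoz !rhoZ !rhoz scalerA mulrC cij scale1r.
Qed.

Lemma dD a b k : d (a + b) k = d a k + d b k.
Proof. by case: d_leibniz => -[-> _]. Qed.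

Lemma dZ x a k : d (x *: a) k = x *: d a k.
Proof. by case: d_leibniz => -[_ ->]. Qed.

Lemma dM a b k : d (a * b) k = a * d b k + d a k * rho k b.
Proof. by case: d_leibniz => _ ->. Qed.

Lemma d_generator i k : d (z i) k = (k == i)%:R.
Proof. by case: d_leibniz => _ _ ->. Qed.

Lemma d0 k : d 0 k = 0.
Proof. by have := dZ 0 0 k; rewrite !scale0r. Qed.

Lemma d1 k : d 1 k = 0.
Proof.
have := dM 1 1 k; rewrite mulr1 mul1r rho1 mulr1.
by move=> dd; apply: (addrI (d 1 k)); rewrite -dd addr0.
Qed.

Lemma d_sum k (F : 'I_4 -> A) : d (\sum_(j < 4) F j) k = \sum_(j < 4) d (F j) k.
Proof. exact: (big_morph (fun a => d a k) (fun a b => dD a b k) (d0 k)). Qed.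

Lemma d_rho l a k : d (rho l a) k = rho l (d a k) * (c k l)%:A.
Proof.
elim/z_gen: a => [|a b IHa IHb|x a IHa|j a IHa].
- by rewrite rho1 !d1 rho0 mul0r.
- by rewrite rhoD !dD IHa IHb rhoD mulrDl.
- by rewrite rhoZ !dZ IHa rhoZ scalerAl.
rewrite rhoM !dM IHa rhoz dZ d_generator rhoD !rhoM.
rewrite rho_nat rhoz; case: (eqVneq k j) => [->|_] /=.
  rewrite mul1r mulrDl mulrA; congr (_ + _).
  by rewrite mulr_algl mulr_algr rho_comm.
by rewrite scaler0 !mul0r !addr0 mulrA.
Qed.

Lemma nablaE w k l : nabla rho d w k l = d (w l) k.
Proof.
rewrite /nabla (big_only1 l) // => [|i ne _].
  by rewrite /tens /dz eqxx rho1 mulr1.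
by rewrite /tens /dz eq_sym (negbTE ne) rho0 mulr0.
Qed.

Lemma nabla_bimodule_connection :
  (forall k l, c k l * c l k = 1) -> is_bimodule_connection rho c d.
Proof.
move=> c_tr; split.
- by move=> w v; apply: T2_ext => k l; rewrite /addT !nablaE dD.
- by move=> a w; apply: T2_ext => k l; rewrite /addT /lactT !nablaE dM.
- move=> w a; apply: T2_ext => k l.
  by rewrite /addT /ractT /ractO /sigma /tens !nablaE dM d_rho addrC mulrA.
split.
- by move=> s s'; apply: T2_ext => k l; rewrite /sigma /addT mulrDl.
- by move=> a s; apply: T2_ext => k l; rewrite /sigma /lactT mulrA.
- move=> s b; apply: T2_ext => k l.
  by rewrite /sigma /ractT !mulr_algr scalerAl rho_comm.
apply: inv_bij => s; apply: T2_ext => k l.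
by rewrite /sigma !mulr_algr scalerA c_tr scale1r.
Qed.

Lemma nabla_metric_compatible (gu : 'I_4 -> 'I_4 -> K) w v :
  id_ginv gu (nabla_tens rho c d w v) = d (ginv gu (tens rho w v)).
Proof.
apply: functional_extensionality => i.
rewrite /id_ginv /ginv d_sum; apply: eq_bigr => j _.
rewrite d_sum; apply: eq_bigr => k _.
rewrite /nabla_tens /addT3 /tensL /tensR /sigma_id !nablaE.
by rewrite [in RHS]mulr_algr dZ dM d_rho mulr_algr addrC mulrA.
Qed.

End DiagonalCalculus.

Section Metric.
Variables (R : realType) (A : algType R[i]) (rho : 'I_4 -> A -> A).
Hypothesis rho_hom : forall i, is_alg_hom (rho i).
Hypothesis rho_mateK : forall i, cancel (rho (mate i)) (rho i).

Lemma two_neq0 : (2 : R[i]) != 0.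
Proof. by rewrite pnatr_eq0. Qed.

Lemma mate_eq i j : (j == mate i) = (i == mate j).
Proof. by rewrite -(can_eq mateK) mateK eq_sym. Qed.

Lemma gl_mate i j : @gl R i j = if j == mate i then 2^-1 else 0.
Proof. by rewrite /gl Pmat_mate; case: eqP; rewrite ?mulr1 ?mulr0. Qed.

Lemma gu_mate i j : @gu R i j = if j == mate i then 2 else 0.
Proof. by rewrite /gu Pmat_mate; case: eqP; rewrite ?mulr1 ?mulr0. Qed.

Lemma ginv_mate (s : T2 A) : ginv (@gu R) s = \sum_(p < 4) s p (mate p) * 2%:A.
Proof.
apply: eq_bigr => p _; rewrite (big_only1 (mate p)) ?gu_mate ?eqxx // => j ne _.
by rewrite gu_mate (negbTE ne) scale0r mulr0.
Qed.

Lemma ginv_sigma (c : 'I_4 -> 'I_4 -> R[i]) :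
  (forall i, c i (mate i) = 1) ->
  forall s : T2 A, ginv (@gu R) (sigma c s) = ginv (@gu R) s.
Proof.
move=> c_mate s; rewrite !ginv_mate [RHS](reindex_inj (can_inj mateK)).
by apply: eq_bigr => p _; rewrite /sigma mateK c_mate scale1r mulr1.
Qed.

Lemma gmet_ract a b : gmet (@gl R) (a * b) = ractT rho (gmet (@gl R) a) b.
Proof.
apply: T2_ext => i j; rewrite /gmet /ractT gl_mate.
case: eqP => [->|_]; last by rewrite scale0r !mulr0 mul0r.
by rewrite rho_mateK -!mulrA mulr_algr mulr_algl.
Qed.

Lemma ginv_ract (s : T2 A) b : ginv (@gu R) (ractT rho s b) = ginv (@gu R) s * b.
Proof.
rewrite !ginv_mate mulr_suml; apply: eq_bigr => p _.
by rewrite /ractT rho_mateK -!mulrA mulr_algr mulr_algl.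
Qed.

Lemma ginv_tens_dz_r x w i :
  ginv (@gu R) (tens rho w (scO x (dz A i))) = w (mate i) * (x * 2)%:A.
Proof.
rewrite ginv_mate (big_only1 (mate i)) // => [|p ne _].
  rewrite /tens /scO /dz mateK eqxx (rho_scalar rho_hom).
  by rewrite -mulrA mulr_algl scalerA.
rewrite /tens /scO /dz -(can_eq mateK) mateK (negbTE ne) scaler0.
by rewrite (rho0 rho_hom) !mulr0 mul0r.
Qed.

Lemma ginv_tens_dz_l w j :
  ginv (@gu R) (tens rho (dz A j) w) = rho j (w (mate j)) * 2%:A.
Proof.
rewrite ginv_mate (big_only1 j) // => [|p ne _]; rewrite /tens /dz.
  by rewrite eqxx mul1r.
by rewrite (negbTE ne) !mul0r.
Qed.

Lemma metric_inverse_l w :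
  sumO2 (fun i j =>
    lactO (ginv (@gu R) (tens rho w (scO (@gl R i j) (dz A i)))) (dz A j)) = w.
Proof.
apply: functional_extensionality => k; rewrite /sumO2 /lactO.
rewrite (eq_bigr (fun i => w (mate i) * (@gl R i k * 2)%:A)) => [|i _]; last first.
  rewrite (big_only1 k) // => [|j ne _]; rewrite /dz.
    by rewrite eqxx mulr1 ginv_tens_dz_r.
  by rewrite eq_sym (negbTE ne) mulr0.
rewrite (big_only1 (mate k)) // => [|i ne _]; rewrite gl_mate.
  by rewrite mateK eqxx (mulVf two_neq0) scale1r mulr1.
by rewrite mate_eq (negbTE ne) mul0r scale0r mulr0.
Qed.

Lemma metric_inverse_r w :
  sumO2 (fun i j =>
    ractO rho (scO (@gl R i j) (dz A i)) (ginv (@gu R) (tens rho (dz A j) w))) = w.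
Proof.
apply: functional_extensionality => k; rewrite /sumO2 /ractO /scO /dz.
rewrite (big_only1 k) // => [|i ne _]; last first.
  by apply: big1 => j _; rewrite eq_sym (negbTE ne) scaler0 mul0r.
rewrite (big_only1 (mate k)) // => [|j ne _]; rewrite gl_mate; last first.
  by rewrite (negbTE ne) scale0r mul0r.
rewrite !eqxx ginv_tens_dz_l mateK (rhoM rho_hom) rho_mateK (rho_scalar rho_hom).
by rewrite mulr_algl mulr_algr scalerA (mulVf two_neq0) scale1r.
Qed.

Lemma gl_metric : is_metric rho (@gl R) (@gu R).
Proof.
split; [split|split|exact: metric_inverse_l|exact: metric_inverse_r].
- by move=> a b; apply: T2_ext => i j; rewrite /gmet /addT mulrDl.
- by move=> a b; apply: T2_ext => i j; rewrite /gmet /lactT mulrA.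
- exact: gmet_ract.
- move=> s s'; rewrite /ginv -big_split; apply: eq_bigr => i _.
  by rewrite -big_split; apply: eq_bigr => j _; rewrite mulrDl.
- move=> a s; rewrite /ginv mulr_sumr; apply: eq_bigr => i _.
  by rewrite mulr_sumr; apply: eq_bigr => j _; rewrite mulrA.
- exact: ginv_ract.
Qed.

End Metric.

Theorem proposition4p4 (R : realType) (theta : R)
  (A : algType R[i]) (z : 'I_4 -> A)
  (HA : is_presentation (Rth theta) z)
  (Hgen : generated_by z)
  (rho : 'I_4 -> A -> A)
  (Hrho : forall i, is_alg_hom (rho i) /\
                    forall j, rho i (z j) = Rth theta j i *: z j)
  (d : A -> Om A)
  (Hd : is_leibniz_ext rho z d) :
  is_riemannian_structure rho (Rth theta) (@gl R) (@gu R) d.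
Proof.
have rho_hom i : is_alg_hom (rho i) := (Hrho i).1.
have rhoz i j : rho i (z j) = Rth theta j i *: z j := (Hrho i).2 j.
have rho_mateK i : cancel (rho (mate i)) (rho i).
  by apply: (rhoK Hgen rho_hom rhoz) => k; apply: Rth_mul_mate.
split.
- exact: gl_metric rho_hom rho_mateK.
- exact: nabla_bimodule_connection Hgen rho_hom rhoz Hd (@Rth_mul_tr R theta).
- exact: ginv_sigma (Rth_mate theta).
- exact (nabla_metric_compatible Hgen rho_hom rhoz Hd (@gu R)).
Qed.
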